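(* Let $\Omega=[a,b)\times[c,d)$ with periodic boundary conditions, $\mathcal{N}_x,\mathcal{N}_y$ positive even integers, $h_x=(b-a)/\mathcal{N}_x$, $h_y=(d-c)/\mathcal{N}_y$, grid points $(x_j,y_k)=(a+jh_x,c+kh_y)$, and grid functions stored as vectors of length $\mathcal{N}_x\mathcal{N}_y$. Let $\mu_x=2\pi/(b-a)$, $\mu_y=2\pi/(d-c)$ and let $\mathbf{D}_2^x$ be the $\mathcal{N}_x\times\mathcal{N}_x$ matrix with $(\mathbf{D}_2^x)_{j,k}=\tfrac12\mu_x^2(-1)^{j+k+1}\csc^2\!\big(\mu_x\tfrac{x_j-x_k}{2}\big)$ for $j\ne k$ and $(\mathbf{D}_2^x)_{j,j}=-\mu_x^2\tfrac{\mathcal{N}_x^2+2}{12}$, and $\mathbf{D}_2^y$ analogously; set $\Delta_h=\mathbf{I}_y\otimes\mathbf{D}_2^x+\mathbf{D}_2^y\otimes\mathbf{I}_x$. Define $\langle u,w\rangle_h=h_xh_y\sum_{j,k}u_{j,k}\bar w_{j,k}$, and let $\cdot$ denote the elementwise product, $|w|^2=w\cdot\bar w$. Let $\varepsilon>0$, $\tau>0$, and let $b_i,a_{ij}$ ($i,j=1,\dots,s$) be real numbers with $b_ia_{ij}+b_ja_{ji}=b_ib_j$ for all $i,j$. Consider the fully discrete scheme: given grid vectors $E^n$ (complex), $N^n,v^n,q^n$ (real), for $i=1,\dots,s$, \[ \begin{aligned} &E_{ni}=E^n+\tau\sum_j a_{ij}k_j^1,\quad k_i^1={\rm i}\big(\Delta_hE_{ni}-\varepsilon^2\Delta_h^2E_{ni}-N_{ni}\cdot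 E_{ni}\big),\\ &N_{ni}=N^n+\tau\sum_j a_{ij}k_j^2,\quad k_i^2=\Delta_hv_{ni},\\ &v_{ni}=v^n+\tau\sum_j a_{ij}k_j^3,\quad k_i^3=N_{ni}-\varepsilon^2\Delta_hN_{ni}+q^n+\tau\sum_j a_{ij}k_j^4,\quad k_i^4=2\,{\rm Re}\big(\bar E_{ni}\cdot k_i^1\big), \end{aligned} \] with update $E^{n+1}=E^n+\tau\sum_ib_ik_i^1$, $N^{n+1}=N^n+\tau\sum_ib_ik_i^2$, $v^{n+1}=v^n+\tau\sum_ib_ik_i^3$, $q^{n+1}=q^n+\tau\sum_ib_ik_i^4$, and initial data $E^0$, $N^0$ the grid values of $E_0,N_0$, $v^0$ the zero-mean solution of $\Delta_hv^0=N_1$ on the grid, and $q^0=|E^0|^2$. Assume the stage equations are solvable at every step. Then for all $n=0,1,\dots,J$: (i) $\langle E^{n+1},E^{n+1}\rangle_h=\langle E^n,E^n\rangle_h$; (ii) $q^n-|E^n|^2=\mathbf{0}$; (iii) $\mathcal{H}_h^{n+1}=\mathcal{H}_h^n$, where \[ \mathcal{H}_h^n=\langle\Delta_hE^n,E^n\rangle_h-\varepsilon^2\langle\Delta_hE^n,\Delta_hE^n\rangle_h-\tfrac12\langle N^n,N^n\rangle_h+\tfrac{\varepsilon^2}{2}\langle\Delta_hN^n,N^n\rangle_h-\langle N^n,|E^n|^2\rangle_h+\tfrac12\langle\Delta_hv^n,v^n\rangle_h. \]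
   Context: This is the Runge–Kutta Fourier pseudo-spectral discretization of the quantum Zakharov system ${\rm i}E_t+\Delta E-\varepsilon^2\Delta^2E=NE$, $N_{tt}-\Delta N+\varepsilon^2\Delta^2N=\Delta|E|^2$, reformulated with $N_t=\Delta v$ and the quadratic auxiliary variable $q=|E|^2$; $\Delta_h$ is the Fourier pseudo-spectral discrete Laplacian. The initial datum $N_1$ satisfies $\int_\Omega N_1=0$. $J$ is the number of time steps. *)

From HB Require Import structures.
From mathcomp Require Import all_boot all_order all_algebra.
From mathcomp Require Import complex.
From mathcomp Require Import reals trigo.
Set Implicit Arguments. Unset Strict Implicit. Unset Printing Implicit Defensive.
Import Order.TTheory GRing.Theory Num.Theory.
Local Open Scope ring_scope.
Local Open Scope complex_scope.

Section ZakharovDefs.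
Variable R : realType.

Definition toC (r : R) : R[i] := r%:C.
Definition cmx (m n : nat) (U : 'M[R]_(m, n)) : 'M[R[i]]_(m, n) := map_mx toC U.

Definition D2 (a b : R) (n : nat) : 'M[R]_n :=
  let mu := 2 * pi / (b - a) in
  let h := (b - a) / n%:R in
  let x (j : 'I_n) := a + j%:R * h in
  \matrix_(j, k)
    if j == k then - mu ^+ 2 * ((n%:R ^+ 2 + 2) / 12)
    else (1 / 2) * mu ^+ 2 * (-1) ^+ (j + k + 1)%N
         / (sin (mu * ((x j - x k) / 2))) ^+ 2.

(* Grid functions on the Nx x Ny grid are stored as Nx x Ny matrices,
   U j k = value at (x_j, y_k).  Under the column-stacking vectorization
   (x index fastest), Delta_h = I_y (x) D2x + D2y (x) I_x acts as
   U |-> D2x U + U D2y^T. *)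
Definition lapR (a b c d : R) (Nx Ny : nat) (U : 'M[R]_(Nx, Ny)) : 'M[R]_(Nx, Ny) :=
  D2 a b Nx *m U + U *m (D2 c d Ny)^T.

Definition lapC (a b c d : R) (Nx Ny : nat) (U : 'M[R[i]]_(Nx, Ny))
  : 'M[R[i]]_(Nx, Ny) :=
  cmx (D2 a b Nx) *m U + U *m (cmx (D2 c d Ny))^T.

Definition emul (T : pzRingType) (m n : nat) (A B : 'M[T]_(m, n)) : 'M[T]_(m, n) :=
  \matrix_(j, k) (A j k * B j k).
Definition cconj_mx (m n : nat) (A : 'M[R[i]]_(m, n)) : 'M[R[i]]_(m, n) :=
  map_mx (@conjc R) A.
Definition abs2 (m n : nat) (A : 'M[R[i]]_(m, n)) : 'M[R[i]]_(m, n) :=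
  emul A (cconj_mx A).

Definition ip_h (hx hy : R) (m n : nat) (U W : 'M[R[i]]_(m, n)) : R[i] :=
  (hx * hy)%:C * \sum_(j < m) \sum_(k < n) U j k * (W j k)^*.

Definition grid (T : Type) (a b c d : R) (Nx Ny : nat) (f : R -> R -> T)
  : 'M[T]_(Nx, Ny) :=
  \matrix_(j, k) f (a + j%:R * ((b - a) / Nx%:R)) (c + k%:R * ((d - c) / Ny%:R)).

Definition Ham (a b c d eps : R) (Nx Ny : nat)
    (E : 'M[R[i]]_(Nx, Ny)) (N v : 'M[R]_(Nx, Ny)) : R[i] :=
  let hx := (b - a) / Nx%:R in
  let hy := (d - c) / Ny%:R in
  let ip := @ip_h hx hy Nx Ny in
  let LE := lapC a b c d E in
  ip LE E - (eps ^+ 2)%:C * ip LE LE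
  - (1 / 2)%:C * ip (cmx N) (cmx N)
  + (eps ^+ 2 / 2)%:C * ip (cmx (lapR a b c d N)) (cmx N)
  - ip (cmx N) (abs2 E)
  + (1 / 2)%:C * ip (cmx (lapR a b c d v)) (cmx v).

End ZakharovDefs.

From HB Require Import structures.
From mathcomp Require Import all_boot all_order all_algebra.
From mathcomp Require Import complex.
From mathcomp Require Import reals trigo.
From mathcomp Require Import ring.
Import Order.TTheory GRing.Theory Num.Theory.
Local Open Scope ring_scope.
Local Open Scope complex_scope.

(* The scheme is a Runge-Kutta method with symplectic coefficients applied to an
   autonomous system y' = f(y) in the variables y = (E, N, v, q).  For a form h
   bilinear over the reals, expanding h(y^{n+1}, y^{n+1}) with the stage
   equations leaves the cross terms b_i b_j h(k_i, k_j), which the condition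
   b_i a_ij + b_j a_ji = b_i b_j turns into stage terms, so that
     h(y^{n+1}, y^{n+1}) - h(y^n, y^n) = sum_i b_i (h(k_i, Y_i) + h(Y_i, k_i)),
   Y_i being the stage values and k_i = f(Y_i).  The mass, and the Hamiltonian
   once <N, |E|^2> is written <N, q>, are quadratic forms whose stage terms
   vanish: the Schrodinger part is skew-adjoint and the energy it exchanges
   with the wave part is carried exactly by k^4 = 2 Re(conj E k^1).  The same
   expansion applied pointwise to |E|^2 shows that q - |E|^2 stays zero. *)

Section SymplecticRungeKutta.
Context {K : comPzRingType} {S : {pred K}} {U : lSemiModType K} {h : U -> U -> K}.
Hypothesis hDl : forall z, {morph h^~ z : x y / x + y}.
Hypothesis hDr : forall x, {morph h x : y z / y + z}.
Hypothesis hZl : {in S, forall c x z, h (c *: x) z = c * h x z}.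
Hypothesis hZr : {in S, forall c x z, h x (c *: z) = c * h x z}.
Context {s : nat} (b : 'I_s -> K) (a : 'I_s -> 'I_s -> K).
Hypothesis b_in : forall i, b i \in S.
Hypothesis a_in : forall i j, a i j \in S.
Hypothesis symplectic : forall i j, b i * a i j + b j * a j i = b i * b j.

Let h_suml (c : 'I_s -> K) (F : 'I_s -> U) z :
  (forall i, c i \in S) -> h (\sum_i c i *: F i) z = \sum_i c i * h (F i) z.
Proof.
move=> cS; have h0 : h 0 z = 0 by apply: (addIr (h 0 z)); rewrite -hDl !add0r.
rewrite (big_morph (h^~ z) (hDl z) h0); apply: eq_bigr => i _; exact: hZl.
Qed.

Let h_sumr (c : 'I_s -> K) x (F : 'I_s -> U) :
  (forall i, c i \in S) -> h x (\sum_i c i *: F i) = \sum_i c i * h x (F i).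
Proof.
move=> cS; have h0 : h x 0 = 0 by apply: (addIr (h x 0)); rewrite -hDr !add0r.
rewrite (big_morph (h x) (hDr x) h0); apply: eq_bigr => i _; exact: hZr.
Qed.

Lemma rk_bilinear_increment x0 z0 (k l : 'I_s -> U) :
  h (x0 + \sum_i b i *: k i) (z0 + \sum_i b i *: l i)
  = h x0 z0 + \sum_i b i * (h (k i) (z0 + \sum_j a i j *: l j)
                           + h (x0 + \sum_j a i j *: k j) (l i)).
Proof.
have cross : \sum_i b i * h (k i) (\sum_j b j *: l j)
    = \sum_i b i * (\sum_j a i j * h (k i) (l j))
      + \sum_i b i * (\sum_j a i j * h (k j) (l i)).
  under eq_bigr do rewrite h_sumr // mulr_sumr.
  under [X in _ = X + _]eq_bigr do rewrite mulr_sumr.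
  under [X in _ = _ + X]eq_bigr do rewrite mulr_sumr.
  rewrite [X in _ = _ + X]exchange_big -big_split /=.
  apply: eq_bigr => i _; rewrite -big_split /=; apply: eq_bigr => j _.
  by rewrite !mulrA -mulrDl symplectic.
rewrite hDl !hDr h_suml // h_sumr // h_suml // cross.
under [in RHS]eq_bigr do rewrite !hDl !hDr h_suml // h_sumr // !mulrDr.
rewrite !big_split /=; ring.
Qed.

Lemma rk_quadratic_invariant x0 (k X : 'I_s -> U) :
  (forall i, X i = x0 + \sum_j a i j *: k j) ->
  (forall i, h (k i) (X i) + h (X i) (k i) = 0) ->
  h (x0 + \sum_i b i *: k i) (x0 + \sum_i b i *: k i) = h x0 x0.
Proof.
move=> X_def hkX; rewrite rk_bilinear_increment big1 ?addr0 // => i _.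
by rewrite -X_def hkX mulr0.
Qed.

End SymplecticRungeKutta.

Lemma pair_add_sumZ (K : pzSemiRingType) (U1 U2 : lSemiModType K) s (c : 'I_s -> K)
    (x : U1) (y : U2) (k : 'I_s -> U1) (l : 'I_s -> U2) :
  (x + \sum_i c i *: k i, y + \sum_i c i *: l i) = (x, y) + \sum_i c i *: (k i, l i).
Proof. by rewrite [RHS]surjective_pairing /= !raddf_sum. Qed.

Section RealToComplex.
Context {R : realType}.

Lemma real_complex_real (r : R) : r%:C \is Num.real.
Proof. by apply/complex_realP; exists r. Qed.

Lemma twice_Re (z : R[i]) : (2 * complex.Re z)%:C = z + z^*%R.
Proof. by rewrite addcJ rmorphM rmorph_nat. Qed.

Lemma conjc_realE (r : R) : (r%:C)^*%R = r%:C.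
Proof. exact: conjc_real. Qed.

Lemma conjcM (x y : R[i]) : (x * y)^*%R = x^*%R * y^*%R.
Proof. exact: rmorphM. Qed.

Lemma cmxE p q (U : 'M[R]_(p, q)) j k : cmx U j k = (U j k)%:C.
Proof. exact: mxE. Qed.

Lemma cmxD p q (U W : 'M[R]_(p, q)) : cmx (U + W) = cmx U + cmx W.
Proof. exact: map_mxD. Qed.

Lemma cmxN p q (U : 'M[R]_(p, q)) : cmx (- U) = - cmx U.
Proof. exact: map_mxN. Qed.

Lemma cmxZ p q (r : R) (U : 'M[R]_(p, q)) : cmx (r *: U) = r%:C *: cmx U.
Proof. exact: map_mxZ. Qed.

Lemma cmxM p q r (U : 'M[R]_(p, q)) (W : 'M[R]_(q, r)) :
  cmx (U *m W) = cmx U *m cmx W.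
Proof. exact: map_mxM. Qed.

Lemma cmx_tr p q (U : 'M[R]_(p, q)) : cmx U^T = (cmx U)^T.
Proof. by apply/matrixP => j k; rewrite !mxE. Qed.

Lemma cmx_add_sumZ p q s (x : 'M[R]_(p, q)) (c : 'I_s -> R) (k : 'I_s -> 'M[R]_(p, q)) :
  cmx (x + \sum_i c i *: k i) = cmx x + \sum_i (c i)%:C *: cmx (k i).
Proof.
rewrite cmxD (big_morph _ (@cmxD p q) (map_mx0 _ p q)).
by under eq_bigr do rewrite cmxZ.
Qed.

Lemma abs2E p q (X : 'M[R[i]]_(p, q)) j k : abs2 X j k = X j k * (X j k)^*%R.
Proof. by rewrite !mxE. Qed.

Lemma cconj_cmx p q (U : 'M[R]_(p, q)) : cconj_mx (cmx U) = cmx U.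
Proof. by apply/matrixP => j k; rewrite !mxE conjc_real. Qed.

Lemma cconjM p q r (U : 'M[R[i]]_(p, q)) (W : 'M[R[i]]_(q, r)) :
  cconj_mx (U *m W) = cconj_mx U *m cconj_mx W.
Proof. exact: map_mxM. Qed.

End RealToComplex.

Section InnerProduct.
Context {R : realType} {hx hy : R} {m n : nat}.
Local Notation ip := (@ip_h R hx hy m n).
Implicit Types U W X Y : 'M[R[i]]_(m, n).

Lemma ip_hDl W : {morph ip^~ W : U U' / U + U'}.
Proof.
move=> U U'; rewrite /ip_h -mulrDr -big_split; congr (_ * _).
apply: eq_bigr => j _; rewrite -big_split; apply: eq_bigr => k _.
by rewrite mxE mulrDl.
Qed.

Lemma ip_hDr U : {morph ip U : W W' / W + W'}.
Proof.
move=> W W'; rewrite /ip_h -mulrDr -big_split; congr (_ * _).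
apply: eq_bigr => j _; rewrite -big_split; apply: eq_bigr => k _.
by rewrite mxE rmorphD mulrDr.
Qed.

Lemma ip_hZl z U W : ip (z *: U) W = z * ip U W.
Proof.
rewrite /ip_h [RHS]mulrCA [X in _ = _ * X]mulr_sumr; congr (_ * _).
apply: eq_bigr => j _; rewrite mulr_sumr; apply: eq_bigr => k _.
by rewrite mxE mulrA.
Qed.

Lemma ip_hZr z U W : ip U (z *: W) = z^*%R * ip U W.
Proof.
rewrite /ip_h [RHS]mulrCA [X in _ = _ * X]mulr_sumr; congr (_ * _).
apply: eq_bigr => j _; rewrite mulr_sumr; apply: eq_bigr => k _.
by rewrite mxE rmorphM mulrCA.
Qed.

Lemma ip_hNl U W : ip (- U) W = - ip U W.
Proof. by rewrite -scaleN1r ip_hZl mulN1r. Qed.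

Lemma ip_hNr U W : ip U (- W) = - ip U W.
Proof. by rewrite -scaleN1r ip_hZr rmorphN1 mulN1r. Qed.

Lemma ip_hBl U U' W : ip (U - U') W = ip U W - ip U' W.
Proof. by rewrite ip_hDl ip_hNl. Qed.

Lemma ip_hBr U W W' : ip U (W - W') = ip U W - ip U W'.
Proof. by rewrite ip_hDr ip_hNr. Qed.

Lemma ip_h_cmxC (P Q : 'M[R]_(m, n)) : ip (cmx P) (cmx Q) = ip (cmx Q) (cmx P).
Proof.
rewrite /ip_h; congr (_ * _); apply: eq_bigr => j _; apply: eq_bigr => k _.
by rewrite !mxE !conjc_realE mulrC.
Qed.

Lemma ip_hZr_real : {in Num.real, forall c U W, ip U (c *: W) = c * ip U W}.
Proof. by move=> c cR U W; rewrite ip_hZr conj_Creal. Qed.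

Lemma ip_h_trace U W : ip U W = (hx * hy)%:C * \tr (U *m (cconj_mx W)^T).
Proof.
rewrite /ip_h /mxtrace; congr (_ * _); apply: eq_bigr => j _; rewrite mxE.
by apply: eq_bigr => k _; rewrite !mxE.
Qed.

Lemma ip_h_mulmxl (P : 'M[R]_m) X Y : ip (cmx P *m X) Y = ip X (cmx P^T *m Y).
Proof.
rewrite !ip_h_trace cconjM cconj_cmx trmx_mul cmx_tr trmxK.
by rewrite [in LHS]mxtrace_mulC [in RHS]mxtrace_mulC mulmxA.
Qed.

Lemma ip_h_mulmxr (Q : 'M[R]_n) X Y : ip (X *m cmx Q) Y = ip X (Y *m cmx Q^T).
Proof. by rewrite !ip_h_trace cconjM cconj_cmx trmx_mul cmx_tr trmxK mulmxA. Qed.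

Lemma ip_h_emul (P : 'M[R]_(m, n)) X Y : ip (emul (cmx P) X) Y = ip X (emul (cmx P) Y).
Proof.
rewrite /ip_h; congr (_ * _); apply: eq_bigr => j _; apply: eq_bigr => k _.
by rewrite !mxE conjcM conjc_realE mulrCA mulrA.
Qed.

End InnerProduct.

Lemma D2_sym {R : realType} (a b : R) p : (D2 a b p)^T = D2 a b p.
Proof.
apply/matrixP => j k; rewrite !mxE eq_sym; case: eqP => // _.
rewrite addnAC addnC addnA -[X in _ = _ / X]sqrrN -sinN.
by rewrite -mulrN -mulNr opprB.
Qed.

Section Laplacian.
Context {R : realType} {a b c d : R} {m n : nat}.
Local Notation L := (@lapC R a b c d m n).

Lemma lapCD : {morph L : X Y / X + Y}.
Proof. by move=> X Y; rewrite /lapC mulmxDr mulmxDl addrACA. Qed.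

Lemma lapCZ z X : L (z *: X) = z *: L X.
Proof. by rewrite /lapC scalerDr -scalemxAl -scalemxAr. Qed.

Lemma lapC_cmx (U : 'M[R]_(m, n)) : L (cmx U) = cmx (lapR a b c d U).
Proof. by rewrite /lapC /lapR cmxD !cmxM cmx_tr. Qed.

Lemma lapC_sym {hx hy : R} X Y : ip_h hx hy (L X) Y = ip_h hx hy X (L Y).
Proof.
rewrite /lapC ip_hDl ip_h_mulmxl -cmx_tr ip_h_mulmxr.
by rewrite trmxK !D2_sym -ip_hDr.
Qed.

End Laplacian.

Section ZakharovStage.
Context {R : realType} {a b c d eps hx hy : R} {m n : nat}.
Local Notation V := 'M[R[i]]_(m, n).
Local Notation ip := (@ip_h R hx hy m n).
Local Notation L := (@lapC R a b c d m n).

Lemma conjc_i : ('i)^*%R = - 'i :> R[i].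
Proof. by apply/eqP; rewrite eq_complex /= oppr0 !eqxx. Qed.

Lemma ip_h_scale_i_skew (W Y : V) :
  ip W Y = ip Y W -> ip ('i *: W) Y + ip Y ('i *: W) = 0.
Proof. by move=> WY; rewrite ip_hZl ip_hZr conjc_i WY mulNr addrN. Qed.

Lemma schrodinger_stage_mass (Y K1 : V) (Nr : 'M[R]_(m, n)) :
  K1 = 'i *: (L Y - (eps ^+ 2)%:C *: L (L Y) - emul (cmx Nr) Y) ->
  ip K1 Y + ip Y K1 = 0.
Proof.
move=> ->; apply: ip_h_scale_i_skew.
by rewrite !ip_hBl !ip_hBr ip_hZl ip_hZr conjc_realE ip_h_emul !lapC_sym.
Qed.

Lemma schrodinger_stage_exchange (G Y K1 : V) (Nr : 'M[R]_(m, n)) :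
  K1 = 'i *: (G - emul (cmx Nr) Y) ->
  ip K1 G + ip G K1
  = ip (cmx Nr) (cmx (\matrix_(j, k) (2 * complex.Re ((Y j k)^* * K1 j k)))).
Proof.
move=> K1_def; rewrite /ip_h -mulrDr; congr (_ * _).
rewrite -big_split; apply: eq_bigr => j _; rewrite -big_split; apply: eq_bigr => k _ /=.
rewrite K1_def !cmxE !mxE twice_Re !(rmorphM, rmorphB, rmorphD) /=.
by rewrite /toC !conjc_realE !conjCK conjc_i; ring.
Qed.

(* The discrete Hamiltonian is not quadratic in (E, N, v); it becomes the
   quadratic form of [zakharov_form] on states (E, N, v, q) once the coupling
   <N, |E|^2> is written as <N, q>. *)
Definition zakharov_form (W W' : V * (V * (V * V))) : R[i] :=
  ip (L W.1) W'.1 - (eps ^+ 2)%:C * ip (L W.1) (L W'.1)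
  - (1 / 2)%:C * ip W.2.1 W'.2.1 + (eps ^+ 2 / 2)%:C * ip (L W.2.1) W'.2.1
  - ip W.2.1 W'.2.2.2 + (1 / 2)%:C * ip (L W.2.2.1) W'.2.2.1.

Definition zakharov_state (E : V) (N v Q : 'M[R]_(m, n)) : V * (V * (V * V)) :=
  (E, (cmx N, (cmx v, cmx Q))).

Lemma zakharov_state_add_sumZ s (r : 'I_s -> R) E N v Q kE kN kv kQ :
  zakharov_state (E + \sum_i (r i)%:C *: kE i) (N + \sum_i r i *: kN i)
    (v + \sum_i r i *: kv i) (Q + \sum_i r i *: kQ i)
  = zakharov_state E N v Q
    + \sum_i (r i)%:C *: zakharov_state (kE i) (kN i) (kv i) (kQ i).
Proof. by rewrite /zakharov_state !cmx_add_sumZ !pair_add_sumZ. Qed.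

Lemma zakharov_formDl W' : {morph zakharov_form^~ W' : W1 W2 / W1 + W2}.
Proof. by move=> W1 W2; rewrite /zakharov_form /= !lapCD !ip_hDl; ring. Qed.

Lemma zakharov_formDr W : {morph zakharov_form W : W1 W2 / W1 + W2}.
Proof. by move=> W1 W2; rewrite /zakharov_form /= !lapCD !ip_hDr; ring. Qed.

Lemma zakharov_formZl z W W' : zakharov_form (z *: W) W' = z * zakharov_form W W'.
Proof. by rewrite /zakharov_form /= !lapCZ !ip_hZl; ring. Qed.

Lemma zakharov_formZr_real :
  {in Num.real, forall z W W', zakharov_form W (z *: W') = z * zakharov_form W W'}.
Proof. by move=> z zR W W'; rewrite /zakharov_form /= !lapCZ !ip_hZr_real //; ring. Qed.

Lemma zakharov_form_stage (Y K1 : V) (Nr vr Qr : 'M[R]_(m, n)) :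
  K1 = 'i *: (L Y - (eps ^+ 2)%:C *: L (L Y) - emul (cmx Nr) Y) ->
  let W := zakharov_state Y Nr vr Qr in
  let K := zakharov_state K1 (lapR a b c d vr) (Nr - eps ^+ 2 *: lapR a b c d Nr + Qr)
             (\matrix_(j, k) (2 * complex.Re ((Y j k)^* * K1 j k))) in
  zakharov_form K W + zakharov_form W K = 0.
Proof.
move=> K1_def W K; rewrite /zakharov_form /=.
set K4 := cmx (\matrix_(j, k) _).
have exchange : ip (L K1) Y - (eps ^+ 2)%:C * ip (L K1) (L Y)
    + (ip (L Y) K1 - (eps ^+ 2)%:C * ip (L Y) (L K1)) = ip (cmx Nr) K4.
  rewrite -(schrodinger_stage_exchange _ _ _ _ K1_def).
  by rewrite ip_hBr ip_hZr conjc_realE ip_hBl ip_hZl -!lapC_sym.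
rewrite -exchange [ip (L (cmx (lapR _ _ _ _ vr))) _]lapC_sym.
rewrite [ip (L (cmx (_ + Qr))) _]lapC_sym !lapC_cmx.
move: (L Y) (L K1) (lapR a b c d Nr) (lapR a b c d vr) => LY LK1 LNr Lvr.
rewrite !cmxD cmxN cmxZ.
rewrite !(ip_hDl, ip_hDr, ip_hNl, ip_hNr, ip_hZl, ip_hZr, conjc_realE).
rewrite [ip (cmx Qr) _]ip_h_cmxC !(rmorphM, rmorph1, fmorphV, rmorph_nat).
by field.
Qed.

End ZakharovStage.

Arguments zakharov_form {R} a b c d eps hx hy {m n} W W'.

Lemma Ham_zakharov_form {R : realType} {a b c d eps : R} {m n : nat}
    {E : 'M[R[i]]_(m, n)} {N v Q : 'M[R]_(m, n)} :
  cmx Q = abs2 E ->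
  Ham a b c d eps E N v = zakharov_form a b c d eps ((b - a) / m%:R) ((d - c) / n%:R)
    (zakharov_state E N v Q) (zakharov_state E N v Q).
Proof. by move=> QE; rewrite /Ham /zakharov_form /= -QE !lapC_cmx. Qed.

Section ZakharovScheme.
Context {R : realType} {a b c d eps tau : R} {Nx Ny s J : nat}.
Context {A : 'M[R]_s} {bw : 'I_s -> R}.
Context {E : nat -> 'M[R[i]]_(Nx, Ny)} {N v q : nat -> 'M[R]_(Nx, Ny)}.
Context {En : nat -> 'I_s -> 'M[R[i]]_(Nx, Ny)} {Nn vn : nat -> 'I_s -> 'M[R]_(Nx, Ny)}.
Context {k1 : nat -> 'I_s -> 'M[R[i]]_(Nx, Ny)}.
Context {k2 k3 k4 : nat -> 'I_s -> 'M[R]_(Nx, Ny)}.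
Hypothesis symplectic : forall i j : 'I_s, bw i * A i j + bw j * A j i = bw i * bw j.
Hypothesis q0 : cmx (q 0%N) = abs2 (E 0%N).
Hypothesis stage : forall n, (n <= J)%N -> forall i : 'I_s,
     (En n i = E n + \sum_(j < s) (tau * A i j)%:C *: k1 n j) /\
         (k1 n i = 'i *: (lapC a b c d (En n i)
                         - (eps ^+ 2)%:C *: lapC a b c d (lapC a b c d (En n i))
                         - emul (cmx (Nn n i)) (En n i))) /\
         (Nn n i = N n + \sum_(j < s) (tau * A i j) *: k2 n j) /\
         (k2 n i = lapR a b c d (vn n i)) /\
         (vn n i = v n + \sum_(j < s) (tau * A i j) *: k3 n j) /\
         (k3 n i = Nn n i - eps ^+ 2 *: lapR a b c d (Nn n i)
                  + q n + \sum_(j < s) (tau * A i j) *: k4 n j) /\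
         (k4 n i = \matrix_(j0, k0)
                    (2 * complex.Re ((En n i j0 k0)^* * k1 n i j0 k0))).
Hypothesis update : forall n, (n <= J)%N ->
     [/\ E n.+1 = E n + \sum_(i < s) (tau * bw i)%:C *: k1 n i,
         N n.+1 = N n + \sum_(i < s) (tau * bw i) *: k2 n i,
         v n.+1 = v n + \sum_(i < s) (tau * bw i) *: k3 n i &
         q n.+1 = q n + \sum_(i < s) (tau * bw i) *: k4 n i].

Local Notation hx := ((b - a) / Nx%:R).
Local Notation hy := ((d - c) / Ny%:R).

Let b_real i : (tau * bw i)%:C \is Num.real := real_complex_real _.
Let a_real i j : (tau * A i j)%:C \is Num.real := real_complex_real _.

Let tau_symplectic i j :
  (tau * bw i)%:C * (tau * A i j)%:C + (tau * bw j)%:C * (tau * A j i)%:C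
  = (tau * bw i)%:C * (tau * bw j)%:C.
Proof.
rewrite -!rmorphM -rmorphD; congr (_%:C).
have -> : tau * bw i * (tau * A i j) + tau * bw j * (tau * A j i)
    = tau ^+ 2 * (bw i * A i j + bw j * A j i) by ring.
by rewrite symplectic; ring.
Qed.

Lemma q_eq_abs2 m : (m <= J.+1)%N -> cmx (q m) = abs2 (E m).
Proof.
elim: m => [|m IH] hm; first exact: q0.
case: (update m hm) => E_next _ _ q_next.
apply/matrixP => j k.
pose h (X Z : 'M[R[i]]_(Nx, Ny)) := X j k * (Z j k)^*%R.
have hDl Z : {morph h^~ Z : X Y / X + Y} by move=> X Y; rewrite /h mxE mulrDl.
have hDr X : {morph h X : Y Z / Y + Z} by move=> Y Z; rewrite /h mxE rmorphD mulrDr.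
have hZl : {in Num.real, forall z X Y, h (z *: X) Y = z * h X Y}.
  by move=> z _ X Y; rewrite /h mxE mulrA.
have hZr : {in Num.real, forall z X Y, h X (z *: Y) = z * h X Y}.
  by move=> z zR X Y; rewrite /h mxE conjcM conj_Creal // mulrCA.
have incr := rk_bilinear_increment hDl hDr hZl hZr _ _ b_real a_real tau_symplectic
  (E m) (E m) (k1 m) (k1 m).
rewrite /h in incr.
rewrite q_next cmx_add_sumZ E_next abs2E incr mxE IH ?leqW // abs2E summxE.
congr (_ + _); apply: eq_bigr => i _; case: (stage m hm i) => <- [_ [_ [_ [_ [_ ->]]]]].
by rewrite mxE cmxE mxE twice_Re conjcM conjCK; ring.
Qed.

Lemma mass_conservation n : (n <= J)%N ->
  ip_h hx hy (E n.+1) (E n.+1) = ip_h hx hy (E n) (E n).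
Proof.
move=> hn; case: (update n hn) => -> _ _ _.
apply: (rk_quadratic_invariant ip_hDl ip_hDr (in1W ip_hZl) ip_hZr_real _ _
  b_real a_real tau_symplectic _ _ (En n)) => i.
  by case: (stage n hn i).
by case: (stage n hn i) => _ [k1_def _]; apply: schrodinger_stage_mass k1_def.
Qed.

Lemma hamiltonian_conservation n : (n <= J)%N ->
  Ham a b c d eps (E n.+1) (N n.+1) (v n.+1) = Ham a b c d eps (E n) (N n) (v n).
Proof.
move=> hn; rewrite (Ham_zakharov_form (q_eq_abs2 n.+1 hn)).
rewrite (Ham_zakharov_form (q_eq_abs2 n (leqW hn))).
case: (update n hn) => -> -> -> ->; rewrite zakharov_state_add_sumZ.
pose W i := zakharov_state (En n i) (Nn n i) (vn n i)
                           (q n + \sum_j (tau * A i j) *: k4 n j).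
apply: (rk_quadratic_invariant zakharov_formDl zakharov_formDr (in1W zakharov_formZl)
  zakharov_formZr_real _ _ b_real a_real tau_symplectic _ _ W) => i;
  case: (stage n hn i) => En_def [k1_def [Nn_def [k2_def [vn_def [k3_def k4_def]]]]].
  by rewrite /W En_def Nn_def vn_def zakharov_state_add_sumZ.
by rewrite k2_def k3_def k4_def -[_ + q n + _]addrA; apply: zakharov_form_stage k1_def.
Qed.

End ZakharovScheme.

Theorem theorem3p3 (R : realType) (a b c d : R) (Nx Ny : nat)
  (eps tau : R) (s : nat) (A : 'M[R]_s) (bw : 'I_s -> R) (J : nat)
  (E0 : R -> R -> R[i]) (N0 N1 : R -> R -> R)
  (E : nat -> 'M[R[i]]_(Nx, Ny)) (N v q : nat -> 'M[R]_(Nx, Ny))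
  (En : nat -> 'I_s -> 'M[R[i]]_(Nx, Ny))
  (Nn vn : nat -> 'I_s -> 'M[R]_(Nx, Ny))
  (k1 : nat -> 'I_s -> 'M[R[i]]_(Nx, Ny))
  (k2 k3 k4 : nat -> 'I_s -> 'M[R]_(Nx, Ny)) :
  a < b -> c < d ->
  (0 < Nx)%N -> ~~ odd Nx -> (0 < Ny)%N -> ~~ odd Ny ->
  0 < eps -> 0 < tau ->
  (forall i j : 'I_s, bw i * A i j + bw j * A j i = bw i * bw j) ->
  (* initial data *)
  E 0%N = grid a b c d Nx Ny E0 ->
  N 0%N = grid a b c d Nx Ny N0 ->
  lapR a b c d (v 0%N) = grid a b c d Nx Ny N1 ->
  \sum_(j < Nx) \sum_(k < Ny) v 0%N j k = 0 ->
  cmx (q 0%N) = abs2 (E 0%N) ->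
  (* stage equations, assumed solved at every step *)
  (forall n, (n <= J)%N -> forall i : 'I_s,
     (En n i = E n + \sum_(j < s) (tau * A i j)%:C *: k1 n j) /\
         (k1 n i = 'i *: (lapC a b c d (En n i)
                         - (eps ^+ 2)%:C *: lapC a b c d (lapC a b c d (En n i))
                         - emul (cmx (Nn n i)) (En n i))) /\
         (Nn n i = N n + \sum_(j < s) (tau * A i j) *: k2 n j) /\
         (k2 n i = lapR a b c d (vn n i)) /\
         (vn n i = v n + \sum_(j < s) (tau * A i j) *: k3 n j) /\
         (k3 n i = Nn n i - eps ^+ 2 *: lapR a b c d (Nn n i)
                  + q n + \sum_(j < s) (tau * A i j) *: k4 n j) /\
         (k4 n i = \matrix_(j0, k0)
                    (2 * complex.Re ((En n i j0 k0)^* * k1 n i j0 k0)))) ->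
  (* update *)
  (forall n, (n <= J)%N ->
     [/\ E n.+1 = E n + \sum_(i < s) (tau * bw i)%:C *: k1 n i,
         N n.+1 = N n + \sum_(i < s) (tau * bw i) *: k2 n i,
         v n.+1 = v n + \sum_(i < s) (tau * bw i) *: k3 n i &
         q n.+1 = q n + \sum_(i < s) (tau * bw i) *: k4 n i]) ->
  forall n, (n <= J)%N ->
    let hx := (b - a) / Nx%:R in
    let hy := (d - c) / Ny%:R in
    [/\ ip_h hx hy (E n.+1) (E n.+1) = ip_h hx hy (E n) (E n),
        cmx (q n) - abs2 (E n) = 0 &
        Ham a b c d eps (E n.+1) (N n.+1) (v n.+1)
        = Ham a b c d eps (E n) (N n) (v n)].
Proof.
move=> _ _ _ _ _ _ _ _ symplectic _ _ _ _ q0 stage update n hn hx hy; split.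
- exact: mass_conservation symplectic stage update n hn.
- by rewrite (q_eq_abs2 symplectic q0 stage update n (leqW hn)) subrr.
- exact: hamiltonian_conservation symplectic q0 stage update n hn.
Qed.
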